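(* Let $\bm{L}\in\mathbb{R}^{m\times n}$ have rank $r$ and compact SVD $\bm{L}=\bm{W}_{\bm{L}}\bm{\Sigma}_{\bm{L}}\bm{V}_{\bm{L}}^T$, and suppose $\bm{L}$ is $\{\mu_1(\bm{L}),\mu_2(\bm{L})\}$-incoherent, i.e. \[\max_{i}\|\bm{W}_{\bm{L}}^T\bm{e}_i\|_2\leq\sqrt{\tfrac{\mu_1(\bm{L}) r}{m}}\quad\text{and}\quad\max_{i}\|\bm{V}_{\bm{L}}^T\bm{e}_i\|_2\leq\sqrt{\tfrac{\mu_2(\bm{L}) r}{n}}.\] Let $J\subseteq[n]$ be such that $\bm{C}=\bm{L}(:,J)\in\mathbb{R}^{m\times|J|}$ has rank $r$, let $\bm{C}=\bm{W}_{\bm{C}}\bm{\Sigma}_{\bm{C}}\bm{V}_{\bm{C}}^T$ be its compact SVD, and set $\beta:=\sqrt{\frac{|J|}{n}}\,\|\bm{V}_{\bm{L}}(J,:)^\dagger\|_2$. Then \begin{enumerate} \item $\max_i\|\bm{W}_{\bm{C}}^T\bm{e}_i\|_2\leq\sqrt{\frac{\mu_1(\bm{L}) r}{m}}$, \item $\max_i\|\bm{V}_{\bm{C}}^T\bm{e}_i\|_2\leq\beta\,\kappa(\bm{L})\sqrt{\frac{\mu_2(\bm{L}) r}{|J|}}$, \item $\kappa(\bm{C})\leq\beta\sqrt{\mu_2(\bm{L}) r}\,\kappa(\bm{L})$. \end{enumerate} In particular, $\bm{C}$ satisfies the incoherence inequalities with parameters $\mu_1(\bm{C})\leq\mu_1(\bm{L})$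 and $\mu_2(\bm{C})\leq\beta^2\kappa(\bm{L})^2\mu_2(\bm{L})$ (where for $\bm{C}$ the dimensions $m,n$ in the incoherence inequalities are replaced by $m,|J|$).
   Context: $[n]=\{1,\dots,n\}$. For a matrix $\bm{A}$, $\bm{A}(I,J)$ denotes the submatrix with row indices $I$ and column indices $J$ ('':'' meaning all indices), $\bm{A}^\dagger$ is the Moore–Penrose pseudoinverse, and $\kappa(\bm{A})=\|\bm{A}\|_2\|\bm{A}^\dagger\|_2=\sigma_{\max}(\bm{A})/\sigma_{\min}(\bm{A})$, with $\sigma_{\min}$ the smallest nonzero singular value. $\bm{e}_i$ is the $i$-th canonical basis vector of the appropriate dimension. A rank-$r$ matrix $\bm{A}\in\mathbb{R}^{p\times q}$ with compact SVD $\bm{W}_{\bm{A}}\bm{\Sigma}_{\bm{A}}\bm{V}_{\bm{A}}^T$ is called $\{\mu_1,\mu_2\}$-incoherent if $\max_i\|\bm{W}_{\bm{A}}^T\bm{e}_i\|_2\le\sqrt{\mu_1 r/p}$ and $\max_i\|\bm{V}_{\bm{A}}^T\bm{e}_i\|_2\le\sqrt{\mu_2 r/q}$. *)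

From HB Require Import structures.
From mathcomp Require Import all_boot all_order all_algebra.
From mathcomp Require Import boolp classical_sets reals.
Set Implicit Arguments. Unset Strict Implicit. Unset Printing Implicit Defensive.
Import Order.TTheory GRing.Theory Num.Theory.
Local Open Scope ring_scope.
Local Open Scope classical_set_scope.

Section LinAlg.
Variable R : realType.

Definition enorm (k : nat) (x : 'cV[R]_k) : R :=
  Num.sqrt (\sum_(i < k) x i 0 ^+ 2).

Definition unitvec (k : nat) (i : 'I_k) : 'cV[R]_k := delta_mx i 0.

Definition opnorm (p q : nat) (A : 'M[R]_(p, q)) : R :=
  sup [set enorm (A *m x) | x in [set x : 'cV[R]_q | enorm x <= 1]].

Definition is_pinv (p q : nat) (A : 'M[R]_(p, q)) (X : 'M[R]_(q, p)) : Prop :=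
  [/\ A *m X *m A = A, X *m A *m X = X,
      (A *m X)^T = A *m X & (X *m A)^T = X *m A].

Definition pinv (p q : nat) (A : 'M[R]_(p, q)) : 'M[R]_(q, p) :=
  xget 0 [set X | is_pinv A X].

Definition kappa (p q : nat) (A : 'M[R]_(p, q)) : R :=
  opnorm A * opnorm (pinv A).

Definition is_compact_svd (p q r : nat) (A : 'M[R]_(p, q))
  (W : 'M[R]_(p, r)) (s : 'rV[R]_r) (V : 'M[R]_(q, r)) : Prop :=
  [/\ W^T *m W = 1%:M, V^T *m V = 1%:M,
      (forall i : 'I_r, 0 < s 0 i),
      (forall i j : 'I_r, (i <= j)%N -> s 0 j <= s 0 i)
    & A = W *m diag_mx s *m V^T].

Definition incoherent_svd (p q r : nat) (W : 'M[R]_(p, r)) (V : 'M[R]_(q, r))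
  (mu1 mu2 : R) : Prop :=
  (forall i : 'I_p, enorm (W^T *m unitvec i) <= Num.sqrt (mu1 * r%:R / p%:R)) /\
  (forall i : 'I_q, enorm (V^T *m unitvec i) <= Num.sqrt (mu2 * r%:R / q%:R)).

Definition incoherent (p q r : nat) (A : 'M[R]_(p, q)) (mu1 mu2 : R) : Prop :=
  \rank A = r /\
  forall W s V, @is_compact_svd p q r A W s V -> incoherent_svd W V mu1 mu2.

Definition colsubset (p q : nat) (A : 'M[R]_(p, q)) (J : {set 'I_q})
  : 'M[R]_(p, #|J|) := colsub (fun k : 'I_#|J| => enum_val k) A.
Definition rowsubset (p q : nat) (A : 'M[R]_(p, q)) (J : {set 'I_p})
  : 'M[R]_(#|J|, q) := rowsub (fun k : 'I_#|J| => enum_val k) A.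

End LinAlg.
Arguments unitvec {R k}.

(* Since C = L(:, J) = W_L S_L V_L(J, :)^T, the column space of C lies in that
   of W_L and has the same dimension r, so W_C = W_L M with M = W_L^T W_C
   orthogonal; this transfers the row norms of W_L to W_C.  Comparing the two
   factorizations of C^T W_C gives V_L(J, :) S_L M = V_C S_C, hence
   V_L(J, :)^+ = S_L M S_C^-1 V_C^T and
     sigma_min(L) |z| <= |V_L(J, :)^+| |S_C z|   for every z.
   Applied to S_C V_C^T e_i = M^T S_L V_L(J, :)^T e_i this bounds the rows of
   V_C, and applied to z = e_r it bounds sigma_min(C) from below, while
   sigma_max(C) <= sigma_max(L) |V_L(J, :)|_F is controlled by the incoherence
   of V_L.  Finally kappa = sigma_max / sigma_min for a compact SVD. *)

From HB Require Import structures.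
From mathcomp Require Import all_boot all_order all_algebra.
From mathcomp Require Import boolp classical_sets reals.
From mathcomp Require Import ring.
Set Implicit Arguments. Unset Strict Implicit. Unset Printing Implicit Defensive.
Import Order.TTheory GRing.Theory Num.Theory.
Local Open Scope ring_scope.
Local Open Scope classical_set_scope.

Section EuclideanNorm.
Variable R : realType.
Implicit Types (k l : nat) (c : R).

Definition sqnorm k (x : 'cV[R]_k) : R := \sum_i x i 0 ^+ 2.

Lemma sqnormE k (x : 'cV[R]_k) : sqnorm x = (x^T *m x) 0 0.
Proof. by rewrite mxE; apply: eq_bigr => i _; rewrite !mxE expr2. Qed.

Lemma sqnorm_ge0 k (x : 'cV[R]_k) : 0 <= sqnorm x.
Proof. by apply: sumr_ge0 => i _; rewrite sqr_ge0. Qed.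

Lemma enormE k (x : 'cV[R]_k) : enorm x = Num.sqrt (sqnorm x).
Proof. by []. Qed.

Lemma enorm_ge0 k (x : 'cV[R]_k) : 0 <= enorm x.
Proof. exact: sqrtr_ge0. Qed.

Lemma sqr_enorm k (x : 'cV[R]_k) : enorm x ^+ 2 = sqnorm x.
Proof. by rewrite sqr_sqrtr ?sqnorm_ge0. Qed.

Lemma ler_enormMl k l c (x : 'cV[R]_k) (y : 'cV[R]_l) : 0 <= c ->
  (enorm x <= c * enorm y) = (sqnorm x <= c ^+ 2 * sqnorm y).
Proof.
by move=> c0; rewrite -!sqr_enorm -exprMn ler_sqr ?nnegrE ?mulr_ge0 ?enorm_ge0.
Qed.

Lemma ler_enormMr k l c (x : 'cV[R]_k) (y : 'cV[R]_l) : 0 <= c ->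
  (c * enorm y <= enorm x) = (c ^+ 2 * sqnorm y <= sqnorm x).
Proof.
by move=> c0; rewrite -!sqr_enorm -exprMn ler_sqr ?nnegrE ?mulr_ge0 ?enorm_ge0.
Qed.

Lemma enorm0 k : enorm (0 : 'cV[R]_k) = 0.
Proof. by rewrite enormE /sqnorm big1 ?sqrtr0 // => i _; rewrite mxE expr0n. Qed.

Lemma enorm_cV0 (x : 'cV[R]_0) : enorm x = 0.
Proof. by rewrite enormE /sqnorm big_ord0 sqrtr0. Qed.

Lemma enorm_eq0 k (x : 'cV[R]_k) : (enorm x == 0) = (x == 0).
Proof.
apply/idP/eqP => [|->]; last by rewrite enorm0.
rewrite sqrtr_eq0 le_eqVlt ltNge sqnorm_ge0 orbF.
rewrite psumr_eq0 => [/allP x0|i _]; last exact: sqr_ge0.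
apply/matrixP => i j; rewrite (ord1 j) mxE; apply/eqP.
by rewrite -sqrf_eq0; apply: x0; rewrite mem_index_enum.
Qed.

Lemma enormZ k a (x : 'cV[R]_k) : enorm (a *: x) = `|a| * enorm x.
Proof.
rewrite !enormE -sqrtr_sqr -sqrtrM ?sqr_ge0 // /sqnorm mulr_sumr.
by congr Num.sqrt; apply: eq_bigr => i _; rewrite mxE exprMn.
Qed.

Lemma enorm_delta k (i : 'I_k) : enorm (delta_mx i 0 : 'cV[R]_k) = 1.
Proof.
rewrite enormE /sqnorm (bigD1 i) //= big1 => [|j /negbTE ji]; last first.
  by rewrite mxE ji expr0n.
by rewrite mxE !eqxx expr1n addr0 sqrtr1.
Qed.

Lemma sqnorm_row k l (A : 'M[R]_(k, l)) (i : 'I_k) :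
  sqnorm (A^T *m delta_mx i 0) = \sum_j A i j ^+ 2.
Proof. by rewrite -colE; apply: eq_bigr => j _; rewrite !mxE. Qed.

Lemma enorm_isometry k l (U : 'M[R]_(k, l)) (x : 'cV[R]_l) :
  U^T *m U = 1%:M -> enorm (U *m x) = enorm x.
Proof.
by move=> UU; rewrite !enormE !sqnormE trmx_mul -mulmxA (mulmxA U^T) UU mul1mx.
Qed.

(* [v - U U^T v] is orthogonal to the range of [U], so Pythagoras applies. *)
Lemma enorm_coisometry k l (U : 'M[R]_(k, l)) (v : 'cV[R]_k) :
  U^T *m U = 1%:M -> enorm (U^T *m v) <= enorm v.
Proof.
move=> UU; rewrite -[enorm v]mul1r ler_enormMl // expr1n mul1r.
set w := U^T *m v.
have pyth : sqnorm (v - U *m w) = sqnorm v - sqnorm w.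
  have wUv : w^T = v^T *m U by rewrite trmx_mul trmxK.
  rewrite !sqnormE !raddfB /= !mulmxBl trmx_mul -!mulmxA (mulmxA U^T) UU mul1mx.
  by rewrite (mulmxA v^T) -wUv !mxE; ring.
by rewrite -subr_ge0 -pyth sqnorm_ge0.
Qed.

Lemma enorm_diag_le k c (s : 'rV[R]_k) (z : 'cV[R]_k) :
  0 <= c -> (forall i, `|s 0 i| <= c) -> enorm (diag_mx s *m z) <= c * enorm z.
Proof.
move=> c0 sc; rewrite ler_enormMl // /sqnorm mulr_sumr; apply: ler_sum => i _.
rewrite mul_diag_mx mxE exprMn ler_wpM2r ?sqr_ge0 // -real_normK ?num_real //.
by rewrite ler_sqr ?nnegrE.
Qed.

Lemma enorm_diag_ge k c (s : 'rV[R]_k) (z : 'cV[R]_k) :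
  0 <= c -> (forall i, c <= s 0 i) -> c * enorm z <= enorm (diag_mx s *m z).
Proof.
move=> c0 cs; rewrite ler_enormMr // /sqnorm mulr_sumr; apply: ler_sum => i _.
by rewrite mul_diag_mx mxE exprMn ler_wpM2r ?sqr_ge0 // ler_sqr ?nnegrE // (le_trans c0).
Qed.

Lemma enorm_diag_delta k (d : 'rV[R]_k) (j : 'I_k) :
  enorm (diag_mx d *m delta_mx j 0) = `|d 0 j|.
Proof.
have -> : diag_mx d *m delta_mx j 0 = d 0 j *: delta_mx j 0 :> 'cV_k.
  apply/matrixP => a b; rewrite mul_diag_mx !mxE (ord1 b) eqxx andbT.
  by case: eqP => [->|_]; rewrite ?mulr1 ?mulr0.
by rewrite enormZ enorm_delta mulr1.
Qed.

End EuclideanNorm.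

Section OperatorNorm.
Variable R : realType.
Implicit Types (k p q : nat) (c : R).

Lemma sum_mul_sqr_le k (a b : 'I_k -> R) :
  (\sum_i a i * b i) ^+ 2 <= (\sum_i a i ^+ 2) * (\sum_i b i ^+ 2).
Proof.
set A := \sum_i a i ^+ 2; set B := \sum_i b i ^+ 2; set C := \sum_i a i * b i.
have B0 : 0 <= B by apply: sumr_ge0 => i _; exact: sqr_ge0.
have [B_0|B_gt0] := eqVneq B 0; last first.
  have discr : \sum_i (B * a i - C * b i) ^+ 2 = B * (A * B - C ^+ 2).
    rewrite (eq_bigr (fun i => B ^+ 2 * a i ^+ 2 +
        (C ^+ 2 * b i ^+ 2 - 2 * B * C * (a i * b i)))) => [|i _]; last by ring.
    rewrite !big_split /= sumrN -!mulr_sumr -/A -/B -/C; ring.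
  have : 0 <= B * (A * B - C ^+ 2).
    by rewrite -discr; apply: sumr_ge0 => i _; exact: sqr_ge0.
  by rewrite pmulr_rge0 ?subr_ge0 // lt_def B_gt0.
have b0 i : b i = 0.
  apply/eqP; rewrite -sqrf_eq0; apply/eqP.
  by apply: (psumr_eq0P (P := predT) (F := fun i => b i ^+ 2)) => // j _; exact: sqr_ge0.
have -> : C = 0 by rewrite /C big1 // => i _; rewrite b0 mulr0.
by rewrite expr0n mulr_ge0 // sumr_ge0 // => i _; exact: sqr_ge0.
Qed.

Definition sqfrob p q (A : 'M[R]_(p, q)) : R := \sum_i \sum_j A i j ^+ 2.

Lemma sqfrob_ge0 p q (A : 'M[R]_(p, q)) : 0 <= sqfrob A.
Proof. by apply: sumr_ge0 => i _; apply: sumr_ge0 => j _; exact: sqr_ge0. Qed.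

Lemma sqfrobE p q (A : 'M[R]_(p, q)) :
  sqfrob A = \sum_i sqnorm (A^T *m delta_mx i 0).
Proof. by apply: eq_bigr => i _; rewrite sqnorm_row. Qed.

Lemma sqfrob_tr p q (A : 'M[R]_(p, q)) : sqfrob A^T = sqfrob A.
Proof.
rewrite /sqfrob exchange_big; apply: eq_bigr => i _.
by apply: eq_bigr => j _; rewrite mxE.
Qed.

Lemma enorm_mulmx_sqfrob p q (A : 'M[R]_(p, q)) (x : 'cV[R]_q) :
  enorm (A *m x) <= Num.sqrt (sqfrob A) * enorm x.
Proof.
rewrite ler_enormMl ?sqrtr_ge0 // sqr_sqrtr ?sqfrob_ge0 // /sqnorm mulr_suml.
by apply: ler_sum => i _; rewrite mxE; exact: sum_mul_sqr_le.
Qed.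

Lemma opnorm_has_sup p q (A : 'M[R]_(p, q)) :
  has_sup [set enorm (A *m x) | x in [set x : 'cV[R]_q | enorm x <= 1]].
Proof.
split; first by exists 0, 0; rewrite /= ?enorm0 ?mulmx0 ?enorm0.
exists (Num.sqrt (sqfrob A)) => _ [x /= x1 <-].
apply: le_trans (enorm_mulmx_sqfrob A x) _.
by rewrite -[leRHS]mulr1 ler_wpM2l ?sqrtr_ge0.
Qed.

Lemma opnorm_ge0 p q (A : 'M[R]_(p, q)) : 0 <= opnorm A.
Proof.
apply: sup_upper_bound (opnorm_has_sup A) _ _.
by exists 0; rewrite /= ?enorm0 ?mulmx0 ?enorm0.
Qed.

Lemma enorm_mulmx_le p q (A : 'M[R]_(p, q)) (x : 'cV[R]_q) :
  enorm (A *m x) <= opnorm A * enorm x.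
Proof.
have [/eqP|x_neq0] := eqVneq (enorm x) 0.
  by rewrite enorm_eq0 => /eqP->; rewrite mulmx0 !enorm0 mulr0.
have x_gt0 : 0 < enorm x by rewrite lt_def x_neq0 enorm_ge0.
rewrite mulrC -ler_pdivrMl //.
have -> : (enorm x)^-1 * enorm (A *m x) = enorm (A *m ((enorm x)^-1 *: x)).
  by rewrite -scalemxAr enormZ ger0_norm ?invr_ge0 ?enorm_ge0.
apply: sup_upper_bound (opnorm_has_sup A) _ _; exists ((enorm x)^-1 *: x) => //=.
by rewrite enormZ ger0_norm ?invr_ge0 ?enorm_ge0 // mulVf.
Qed.

Lemma opnorm_le p q c (A : 'M[R]_(p, q)) :
  0 <= c -> (forall x, enorm (A *m x) <= c * enorm x) -> opnorm A <= c.
Proof.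
move=> c0 Ac; apply: ge_sup; first by case: (opnorm_has_sup A).
move=> _ [x /= x1 <-]; apply: le_trans (Ac x) _.
by rewrite -[leRHS]mulr1 ler_wpM2l.
Qed.

Lemma opnorm0 p q : opnorm (0 : 'M[R]_(p, q)) = 0.
Proof.
apply/eqP; rewrite eq_le opnorm_ge0 andbT.
by apply: opnorm_le => // x; rewrite mul0mx enorm0 mul0r.
Qed.

Lemma opnorm_isodiag k p q (U : 'M[R]_(p, k)) (d : 'rV[R]_k) (V : 'M[R]_(q, k))
    (j : 'I_k) :
  U^T *m U = 1%:M -> V^T *m V = 1%:M -> (forall i, `|d 0 i| <= `|d 0 j|) ->
  opnorm (U *m diag_mx d *m V^T) = `|d 0 j|.
Proof.
move=> UU VV dj; apply/eqP; rewrite eq_le; apply/andP; split.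
  apply: opnorm_le => // x; rewrite -!mulmxA enorm_isometry //.
  apply: le_trans (enorm_diag_le _ _ dj) _ => //.
  by rewrite ler_wpM2l ?enorm_coisometry.
have := enorm_mulmx_le (U *m diag_mx d *m V^T) (V *m delta_mx j 0).
rewrite (enorm_isometry _ VV) enorm_delta mulr1; apply: le_trans.
by rewrite -!mulmxA (mulmxA V^T) VV mul1mx (enorm_isometry _ UU) enorm_diag_delta.
Qed.

Lemma kappa_ge0 p q (A : 'M[R]_(p, q)) : 0 <= kappa A.
Proof. by rewrite mulr_ge0 ?opnorm_ge0. Qed.

End OperatorNorm.

Section PseudoInverse.
Variable R : realType.
Implicit Types (k p q : nat).

Lemma is_pinv_trmx p q (A : 'M[R]_(p, q)) X : is_pinv A X -> is_pinv A^T X^T.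
Proof.
case=> AXA XAX AX XA; split; rewrite -?trmx_mul ?mulmxA ?AXA ?XAX //.
- by rewrite XA.
- by rewrite AX.
Qed.

Lemma is_pinv_sandwich p q (A : 'M[R]_(p, q)) X Y :
  is_pinv A X -> is_pinv A Y -> X = X *m A *m Y.
Proof.
case=> _ XAX AX _ [AYA _ AY _].
have trA : A^T = A^T *m (A *m Y) by rewrite -AY -trmx_mul AYA.
rewrite -{1}XAX -mulmxA -AX trmx_mul trA.
by rewrite (mulmxA X^T) -trmx_mul AX !mulmxA XAX.
Qed.

Lemma is_pinv_uniq p q (A : 'M[R]_(p, q)) X Y : is_pinv A X -> is_pinv A Y -> X = Y.
Proof.
move=> AX AY; rewrite (is_pinv_sandwich AX AY).
have := is_pinv_sandwich (is_pinv_trmx AY) (is_pinv_trmx AX).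
by rewrite -!trmx_mul => /(congr1 trmx); rewrite !trmxK mulmxA => <-.
Qed.

Lemma pinvE p q (A : 'M[R]_(p, q)) X : is_pinv A X -> pinv A = X.
Proof. by move=> AX; apply: xget_unique => // Y AY; exact: is_pinv_uniq AY AX. Qed.

Lemma is_pinv_isometry_factor k p q (U : 'M[R]_(p, k)) (D E : 'M[R]_k)
    (V : 'M[R]_(q, k)) :
  U^T *m U = 1%:M -> V^T *m V = 1%:M -> D *m E = 1%:M -> E *m D = 1%:M ->
  is_pinv (U *m D *m V^T) (V *m E *m U^T).
Proof.
move=> UU VV DE ED.
have AX : U *m D *m V^T *m (V *m E *m U^T) = U *m U^T.
  by rewrite !mulmxA -(mulmxA _ V^T V) VV mulmx1 -(mulmxA _ D E) DE mulmx1.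
have XA : V *m E *m U^T *m (U *m D *m V^T) = V *m V^T.
  by rewrite !mulmxA -(mulmxA _ U^T U) UU mulmx1 -(mulmxA _ E D) ED mulmx1.
split; rewrite ?AX ?XA ?trmx_mul ?trmxK //.
- by rewrite !mulmxA -(mulmxA U U^T U) UU mulmx1.
- by rewrite !mulmxA -(mulmxA V V^T V) VV mulmx1.
Qed.

Definition invrow k (d : 'rV[R]_k) : 'rV[R]_k := map_mx GRing.inv d.

Lemma diag_invrow k (d : 'rV[R]_k) : (forall i, d 0 i != 0) ->
  diag_mx d *m diag_mx (invrow d) = 1%:M /\ diag_mx (invrow d) *m diag_mx d = 1%:M.
Proof.
move=> d_neq0; rewrite !mulmx_diag -!diag_const_mx.
by split; congr diag_mx; apply/matrixP => i j; rewrite !mxE ?mulfV ?mulVf.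
Qed.

End PseudoInverse.

Section CompactSVD.
Variable R : realType.
Variables (p q r : nat) (A : 'M[R]_(p, q)).
Variables (W : 'M[R]_(p, r.+1)) (s : 'rV[R]_r.+1) (V : 'M[R]_(q, r.+1)).
Hypothesis svdA : is_compact_svd A W s V.

Lemma pinv_svd : pinv A = V *m diag_mx (invrow s) *m W^T.
Proof.
case: svdA => WW VV s_gt0 _ ->; apply/pinvE/is_pinv_isometry_factor => //;
  by case: (diag_invrow (fun i => lt0r_neq0 (s_gt0 i))).
Qed.

Lemma opnorm_svd : opnorm A = s 0 ord0.
Proof.
case: svdA => WW VV s_gt0 s_decr ->.
rewrite (opnorm_isodiag (j := ord0)) // ?gtr0_norm // => i.
by rewrite !gtr0_norm ?s_decr.
Qed.

Lemma opnorm_pinv_svd : opnorm (pinv A) = (s 0 ord_max)^-1.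
Proof.
case: (svdA) => WW VV s_gt0 s_decr _.
rewrite pinv_svd (opnorm_isodiag (j := ord_max)) // ?mxE ?gtr0_norm ?invr_gt0 // => i.
by rewrite !mxE !gtr0_norm ?invr_gt0 // lef_pV2 ?posrE // s_decr // -ltnS.
Qed.

Lemma kappa_svd : kappa A = s 0 ord0 / s 0 ord_max.
Proof. by rewrite /kappa opnorm_svd opnorm_pinv_svd. Qed.

End CompactSVD.

Lemma colsubset_mul_tr (R : realType) k p q (A : 'M[R]_(p, k)) (B : 'M[R]_(q, k))
    (J : {set 'I_q}) :
  colsubset (A *m B^T) J = A *m (rowsubset B J)^T.
Proof. by rewrite /colsubset /rowsubset trmx_mxsub -mulmx_colsub. Qed.

Lemma rowsubset_tr_delta (R : realType) k q (B : 'M[R]_(q, k)) (J : {set 'I_q})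
    (i : 'I_#|J|) :
  (rowsubset B J)^T *m delta_mx i 0 = B^T *m delta_mx (enum_val i) 0 :> 'cV_k.
Proof. by apply/matrixP => a b; rewrite -!colE !mxE. Qed.

Section ColumnSubmatrix.
Variable R : realType.
Variables (m n r : nat) (L : 'M[R]_(m, n)) (J : {set 'I_n}).
Variables (WL : 'M[R]_(m, r.+1)) (sL : 'rV[R]_r.+1) (VL : 'M[R]_(n, r.+1)).
Variables (WC : 'M[R]_(m, r.+1)) (sC : 'rV[R]_r.+1) (VC : 'M[R]_(#|J|, r.+1)).
Hypothesis svdL : is_compact_svd L WL sL VL.
Hypothesis svdC : is_compact_svd (colsubset L J) WC sC VC.

Local Notation C := (colsubset L J).
Local Notation VJ := (rowsubset VL J).
Local Notation SL := (diag_mx sL).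
Local Notation SC := (diag_mx sC).
Let M := WL^T *m WC.

Lemma colsubset_svd : C = WL *m SL *m VJ^T.
Proof. by case: svdL => _ _ _ _ ->; rewrite colsubset_mul_tr. Qed.

Lemma left_factor_colsubset : WC = WL *m M.
Proof.
case: svdC => _ VV sC_gt0 _ Cdef.
have [SC_inv _] := diag_invrow (fun i => lt0r_neq0 (sC_gt0 i)).
have WCE : WC = C *m (VC *m diag_mx (invrow sC)).
  by rewrite Cdef -!mulmxA (mulmxA VC^T) VV mul1mx SC_inv mulmx1.
case: svdL => WW _ _ _ _.
by rewrite /M WCE colsubset_svd !mulmxA -(mulmxA WL WL^T WL) WW mulmx1.
Qed.

Lemma trmx_mul_left_factor : M^T *m M = 1%:M.
Proof.
case: svdC => WW _ _ _ _.
by rewrite trmx_mul trmxK -mulmxA -left_factor_colsubset.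
Qed.

Lemma mul_left_factor_tr : M *m M^T = 1%:M.
Proof. exact/mulmx1C/trmx_mul_left_factor. Qed.

Lemma right_factor_colsubset : VJ *m SL *m M = VC *m SC.
Proof.
case: (svdC) => WW _ _ _ Cdef.
have := congr1 (fun B => B^T *m WC) colsubset_svd.
rewrite /= {1}Cdef !trmx_mul !trmxK !tr_diag_mx -!mulmxA WW mulmx1 => ->.
by rewrite /M !mulmxA.
Qed.

Lemma pinv_rowsubset : pinv VJ = SL *m M *m diag_mx (invrow sC) *m VC^T.
Proof.
case: svdL => _ _ sL_gt0 _ _; case: svdC => _ VV sC_gt0 _ _.
have [SL_inv SL_inv'] := diag_invrow (fun i => lt0r_neq0 (sL_gt0 i)).
have [SC_inv SC_inv'] := diag_invrow (fun i => lt0r_neq0 (sC_gt0 i)).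
have VJE := right_factor_colsubset; have MM := trmx_mul_left_factor.
(* Hiding the body of [M] stops [mulmxA] from rewriting inside it. *)
have MM' := mul_left_factor_tr; clearbody M.
have -> : VJ = VC *m (SC *m M^T *m diag_mx (invrow sL)) *m (1%:M)^T.
  rewrite trmx1 mulmx1 !mulmxA -VJE -(mulmxA _ M) MM' mulmx1.
  by rewrite -mulmxA SL_inv mulmx1.
rewrite (pinvE (is_pinv_isometry_factor (E := SL *m M *m diag_mx (invrow sC)) _ _ _ _)).
- by rewrite mul1mx.
- exact: VV.
- by rewrite trmx1 mulmx1.
- rewrite !mulmxA -(mulmxA _ (diag_mx (invrow sL))) SL_inv' mulmx1.
  by rewrite -(mulmxA SC) MM mulmx1 SC_inv.
- rewrite !mulmxA -(mulmxA _ (diag_mx (invrow sC))) SC_inv' mulmx1.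
  by rewrite -(mulmxA SL) MM' mulmx1 SL_inv.
Qed.

Lemma pinv_rowsubset_mul : pinv VJ *m VC *m SC = SL *m M.
Proof.
case: svdC => _ VV sC_gt0 _ _.
have [_ SC_inv'] := diag_invrow (fun i => lt0r_neq0 (sC_gt0 i)).
by rewrite pinv_rowsubset -(mulmxA _ VC^T) VV mulmx1 -mulmxA SC_inv' mulmx1.
Qed.

Lemma smin_enorm_le_pinv_rowsubset (z : 'cV[R]_r.+1) :
  sL 0 ord_max * enorm z <= opnorm (pinv VJ) * enorm (SC *m z).
Proof.
case: svdL => _ _ sL_gt0 sL_decr _; case: svdC => _ VV _ _ _.
rewrite -(enorm_isometry (SC *m z) VV); apply: le_trans _ (enorm_mulmx_le _ _).
rewrite !mulmxA pinv_rowsubset_mul -mulmxA -(enorm_isometry z trmx_mul_left_factor).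
by apply: enorm_diag_ge => [|i]; [exact: ltW | apply: sL_decr; rewrite -ltnS].
Qed.

Lemma enorm_left_colsubset (i : 'I_m) :
  enorm (WC^T *m delta_mx i 0) = enorm (WL^T *m delta_mx i 0).
Proof.
have MM' : M^T^T *m M^T = 1%:M by rewrite trmxK mul_left_factor_tr.
by rewrite {1}left_factor_colsubset trmx_mul -mulmxA enorm_isometry.
Qed.

Lemma enorm_right_colsubset (i : 'I_#|J|) :
  enorm (VC^T *m delta_mx i 0)
    <= opnorm (pinv VJ) * kappa L * enorm (VL^T *m delta_mx (enum_val i) 0).
Proof.
case: (svdL) => _ _ sL_gt0 sL_decr _.
have sL_min_gt0 := sL_gt0 ord_max.
rewrite (kappa_svd svdL) [opnorm _ * _]mulrC -!mulrA mulrCA ler_pdivlMl // mulrCA.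
apply: le_trans (smin_enorm_le_pinv_rowsubset _) _; rewrite ler_wpM2l ?opnorm_ge0 //.
have SCVC : SC *m VC^T = M^T *m SL *m VJ^T.
  rewrite -[SC]tr_diag_mx -trmx_mul -right_factor_colsubset.
  by rewrite !trmx_mul tr_diag_mx mulmxA.
have MM' : M^T^T *m M^T = 1%:M by rewrite trmxK mul_left_factor_tr.
rewrite mulmxA SCVC -!mulmxA enorm_isometry // rowsubset_tr_delta.
apply: enorm_diag_le => [|j]; first exact: ltW.
by rewrite gtr0_norm // sL_decr.
Qed.

Lemma kappa_colsubset : kappa C <= kappa L * opnorm (pinv VJ) * Num.sqrt (sqfrob VJ).
Proof.
case: (svdL) => WW _ sL_gt0 sL_decr _; case: (svdC) => _ _ sC_gt0 _ _.
have sC_min : sL 0 ord_max <= opnorm (pinv VJ) * sC 0 ord_max.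
  have := smin_enorm_le_pinv_rowsubset (delta_mx ord_max 0).
  by rewrite enorm_delta enorm_diag_delta mulr1 gtr0_norm.
have sL0 := ltW (sL_gt0 ord0).
have sL_le i : `|sL 0 i| <= sL 0 ord0 by rewrite gtr0_norm ?sL_decr.
have sC_max : sC 0 ord0 <= sL 0 ord0 * Num.sqrt (sqfrob VJ).
  rewrite -(opnorm_svd svdC); apply: opnorm_le => [|x].
    by rewrite mulr_ge0 ?sqrtr_ge0.
  rewrite colsubset_svd -!mulmxA enorm_isometry // -mulrA.
  apply: le_trans (enorm_diag_le _ sL0 sL_le) _.
  by rewrite ler_wpM2l // -sqfrob_tr enorm_mulmx_sqfrob.
rewrite (kappa_svd svdC) (kappa_svd svdL) ler_pdivrMr //.
set c := sL 0 ord0 / sL 0 ord_max * Num.sqrt (sqfrob VJ).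
have c0 : 0 <= c by rewrite !mulr_ge0 ?invr_ge0 ?sqrtr_ge0 ?ltW.
have -> : sL 0 ord0 / sL 0 ord_max * opnorm (pinv VJ) * Num.sqrt (sqfrob VJ) *
    sC 0 ord_max = c * (opnorm (pinv VJ) * sC 0 ord_max) by rewrite /c; ring.
apply: le_trans sC_max (le_trans _ (ler_wpM2l c0 sC_min)).
by rewrite /c mulrAC divfK ?lt0r_neq0.
Qed.

End ColumnSubmatrix.

Lemma sqrt_sqfrob_le (R : realType) p q c (A : 'M[R]_(p, q)) : 0 <= c ->
  (forall i, enorm (A^T *m delta_mx i 0) <= c) ->
  Num.sqrt (sqfrob A) <= Num.sqrt p%:R * c.
Proof.
move=> c0 Ac; rewrite -[c in leRHS](ger0_norm c0) -sqrtr_sqr -sqrtrM ?ler0n //.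
rewrite ler_sqrt ?mulr_ge0 ?ler0n ?sqr_ge0 // sqfrobE -[p in p%:R]card_ord.
rewrite mulr_natl -sumr_const; apply: ler_sum => i _.
by rewrite -sqr_enorm ler_sqr ?nnegrE ?enorm_ge0.
Qed.

Lemma sqrt_ratioMsqrt (R : rcfType) (j n : nat) (x : R) :
  Num.sqrt (j%:R / n%:R) * Num.sqrt x = Num.sqrt j%:R * Num.sqrt (x / n%:R).
Proof. by rewrite -!sqrtrM ?ler0n ?divr_ge0 // mulrAC mulrA. Qed.

Lemma sqrt_ratioK (R : rcfType) (j n : nat) (x : R) : (0 < j)%N ->
  Num.sqrt (j%:R / n%:R) * Num.sqrt (x / j%:R) = Num.sqrt (x / n%:R).
Proof.
move=> j_gt0; rewrite -sqrtrM ?divr_ge0 ?ler0n //; congr Num.sqrt.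
by rewrite mulrC mulrA divfK ?pnatr_eq0 -?lt0n.
Qed.

Section IncoherentColumns.
Variable R : realType.
Variables (m n r : nat) (L : 'M[R]_(m, n)) (J : {set 'I_n}) (mu1 mu2 : R).
Variables (WL : 'M[R]_(m, r.+1)) (sL : 'rV[R]_r.+1) (VL : 'M[R]_(n, r.+1)).
Hypothesis svdL : is_compact_svd L WL sL VL.
Hypothesis incL : incoherent_svd WL VL mu1 mu2.

Let beta := Num.sqrt (#|J|%:R / n%:R) * opnorm (pinv (rowsubset VL J)).

Lemma incoherent_colsubset_svd W s (V : 'M[R]_(#|J|, r.+1)) :
  is_compact_svd (colsubset L J) W s V ->
  (forall i, enorm (W^T *m unitvec i) <= Num.sqrt (mu1 * r.+1%:R / m%:R)) /\
  (forall i, enorm (V^T *m unitvec i)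
               <= beta * kappa L * Num.sqrt (mu2 * r.+1%:R / #|J|%:R)).
Proof.
case: incL => incW incV svdC; split=> i.
  by rewrite (enorm_left_colsubset svdL svdC) incW.
apply: le_trans (enorm_right_colsubset svdL svdC i) _.
have J_gt0 : (0 < #|J|)%N by apply: leq_ltn_trans (ltn_ord i).
rewrite /beta -[_ * _ * kappa L]mulrA [X in _ <= X]mulrAC [X in _ <= X]mulrC.
rewrite sqrt_ratioK //.
by apply: ler_wpM2l; rewrite ?mulr_ge0 ?opnorm_ge0 ?kappa_ge0 ?incV.
Qed.

Lemma kappa_incoherent_colsubset W s (V : 'M[R]_(#|J|, r.+1)) :
  is_compact_svd (colsubset L J) W s V ->
  kappa (colsubset L J) <= beta * Num.sqrt (mu2 * r.+1%:R) * kappa L.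
Proof.
case: incL => _ incV svdC; apply: le_trans (kappa_colsubset svdL svdC) _.
set X := opnorm _.
have -> : beta * Num.sqrt (mu2 * r.+1%:R) * kappa L =
    kappa L * X * (Num.sqrt #|J|%:R * Num.sqrt (mu2 * r.+1%:R / n%:R)).
  by rewrite -sqrt_ratioMsqrt /beta -/X; ring.
apply: ler_wpM2l; first by rewrite mulr_ge0 ?kappa_ge0 ?opnorm_ge0.
apply: sqrt_sqfrob_le => [|i]; first exact: sqrtr_ge0.
by rewrite rowsubset_tr_delta incV.
Qed.

End IncoherentColumns.

Theorem theorem3p1 (R : realType) (m n r : nat) (L : 'M[R]_(m, n))
  (WL : 'M[R]_(m, r)) (sL : 'rV[R]_r) (VL : 'M[R]_(n, r)) (mu1 mu2 : R)
  (J : {set 'I_n})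
  (WC : 'M[R]_(m, r)) (sC : 'rV[R]_r) (VC : 'M[R]_(#|J|, r)) :
  \rank L = r ->
  is_compact_svd L WL sL VL ->
  incoherent_svd WL VL mu1 mu2 ->
  \rank (colsubset L J) = r ->
  is_compact_svd (colsubset L J) WC sC VC ->
  let beta := Num.sqrt (#|J|%:R / n%:R) * opnorm (pinv (rowsubset VL J)) in
  [/\ (forall i : 'I_m,
         enorm (WC^T *m unitvec i) <= Num.sqrt (mu1 * r%:R / m%:R)),
      (forall i : 'I_#|J|,
         enorm (VC^T *m unitvec i)
           <= beta * kappa L * Num.sqrt (mu2 * r%:R / #|J|%:R)),
      kappa (colsubset L J) <= beta * Num.sqrt (mu2 * r%:R) * kappa L
    & incoherent r (colsubset L J) mu1 (beta ^+ 2 * kappa L ^+ 2 * mu2)].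
Proof.
(* [\rank L = r] is implied by the compact SVD of [L]. *)
case: r WL sL VL WC sC VC => [|r] WL sL VL WC sC VC _ svdL incL rankC svdC beta;
  have beta_ge0 : 0 <= beta by rewrite mulr_ge0 ?sqrtr_ge0 ?opnorm_ge0.
- have C0 : colsubset L J = 0 by case: svdC => _ _ _ _ ->; rewrite thinmx0 !mul0mx.
  split=> [i|i||]; rewrite ?enorm_cV0 ?sqrtr_ge0 //.
  + apply: mulr_ge0; last exact: sqrtr_ge0.
    exact: mulr_ge0 beta_ge0 (kappa_ge0 _).
  + by rewrite C0 /kappa opnorm0 !mul0r mulr0 sqrtr0 mulr0 mul0r.
  + by split=> // W s V _; split=> i; rewrite enorm_cV0 sqrtr_ge0.
- have [incWC incVC] := incoherent_colsubset_svd svdL incL svdC.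
  split=> //; first exact (kappa_incoherent_colsubset svdL incL svdC).
  split=> // W s V /(incoherent_colsubset_svd svdL incL) [incW incV].
  split=> // i.
  have -> : beta ^+ 2 * kappa L ^+ 2 * mu2 * r.+1%:R / #|J|%:R =
      (beta * kappa L) ^+ 2 * (mu2 * r.+1%:R / #|J|%:R) by ring.
  rewrite sqrtrM ?sqr_ge0 // sqrtr_sqr ger0_norm; first exact: incV.
  exact: mulr_ge0 beta_ge0 (kappa_ge0 _).
Qed.
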